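(* Let $I$ be a set, $\mathcal{E}=(E_i)_{i\in I}$ a family of nonempty sets, $T$ a multiple relation in $\mathcal{E}$ and $(K,L)$ a bipartition of $J_T$. Then $T$ is scindable along $(K,L)$ if and only if for all $x\in G_{T_{|K}}$ and all $y\in G_{T_{|L}}$ one has $x+y\in G_T$.
   Context: For $J\subseteq I$, $Z_J=\prod_{j\in J}E_j$ ($Z_\emptyset=\{\bullet\}$). For $x\in Z_K$, $y\in Z_L$ with $K\cap L=\emptyset$, $x+y\in Z_{K\cup L}$ is the family agreeing with $x$ on $K$ and with $y$ on $L$. A multiple relation is $R=(J_R,G_R)$ with $G_R\subseteq Z_{J_R}$; $R_{|K}=(K,\{x_{|K}:x\in G_R\})$; $R\bowtie S=(J_R\cup J_S,\{x\in Z_{J_R\cup J_S}: x_{|J_R}\in G_R,\ x_{|J_S}\in G_S\})$. A bipartition of $J$ is a pair of nonempty disjoint subsets with union $J$. $T$ is scindable along $(K,L)$ if $T=R\bowtie S$ for some relations $R,S$ with $J_R=K$, $J_S=L$. *)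

From Stdlib Require Import ClassicalEpsilon.

Set Implicit Arguments.

Section MultipleRelations.

Variable I : Type.
Variable E : I -> Type.

Definition subsetI (K J : I -> Prop) : Prop := forall i, K i -> J i.
Definition setU (K L : I -> Prop) : I -> Prop := fun i => K i \/ L i.

(* Z_J = prod_{j in J} E_j  (Z_emptyset is a singleton: the empty family) *)
Definition Z (J : I -> Prop) : Type := forall i, J i -> E i.

Definition resx (J K : I -> Prop) (h : subsetI K J) (x : Z J) : Z K :=
  fun i hk => x i (h i hk).

(* x + y in Z_{K ∪ L}: agrees with x on K and with y on L
   (well defined when K and L are disjoint) *)
Definition plus (K L : I -> Prop) (x : Z K) (y : Z L) : Z (setU K L) :=
  fun i h =>
    match excluded_middle_informative (K i) with
    | left hk => x i hk
    | right nk => y i (match h with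
                       | or_introl hk => False_ind _ (nk hk)
                       | or_intror hl => hl
                       end)
    end.

Record mrel : Type := MRel { J : I -> Prop ; G : Z J -> Prop }.

Definition restr (R : mrel) (K : I -> Prop) (h : subsetI K (J R)) : mrel :=
  @MRel K (fun z => exists x, G R x /\ z = resx h x).

Lemma subsetU_l (K L : I -> Prop) : subsetI K (setU K L).
Proof. intros i h; left; exact h. Qed.
Lemma subsetU_r (K L : I -> Prop) : subsetI L (setU K L).
Proof. intros i h; right; exact h. Qed.

Definition join (R S : mrel) : mrel :=
  @MRel (setU (J R) (J S))
    (fun x => G R (resx (@subsetU_l (J R) (J S)) x) /\
              G S (resx (@subsetU_r (J R) (J S)) x)).

Record bipartition (J0 K L : I -> Prop) : Prop := Bipartition {
  bip_K_ne : exists i, K i ;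
  bip_L_ne : exists i, L i ;
  bip_disj : forall i, K i -> L i -> False ;
  bip_union : setU K L = J0 }.

Lemma bip_subK (J0 K L : I -> Prop) (b : bipartition J0 K L) : subsetI K J0.
Proof. destruct b as [_ _ _ e]; rewrite <- e; apply subsetU_l. Qed.
Lemma bip_subL (J0 K L : I -> Prop) (b : bipartition J0 K L) : subsetI L J0.
Proof. destruct b as [_ _ _ e]; rewrite <- e; apply subsetU_r. Qed.

Definition scindable (T : mrel) (K L : I -> Prop) : Prop :=
  exists R S : mrel, J R = K /\ J S = L /\ T = join R S.

End MultipleRelations.

Arguments MRel {I E}.
Arguments J {I E}.
Arguments G {I E}.

(* If T = R ⋈ S, the restrictions T_{|K} and T_{|L} are contained in R and S, so
   every x + y with x in T_{|K} and y in T_{|L} lies in R ⋈ S = T.  Conversely,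
   T_{|K} ⋈ T_{|L} always contains T, and closure under + gives the reverse
   inclusion, since z = z_{|K} + z_{|L}; hence T = T_{|K} ⋈ T_{|L}. *)
From Stdlib Require Import ClassicalEpsilon FunctionalExtensionality
  PropExtensionality ProofIrrelevance Eqdep.

Set Implicit Arguments.

Section Scindable.

Variable I : Type.
Variable E : I -> Type.

Lemma resx_irrelevant (J0 K : I -> Prop) (h h' : subsetI K J0) (z : Z E J0) :
  resx h z = resx h' z.
Proof. now rewrite (proof_irrelevance _ h h'). Qed.

Lemma plus_resx (K L : I -> Prop) (hK : subsetI K (setU K L))
  (hL : subsetI L (setU K L)) (z : Z E (setU K L)) :
  plus (resx hK z) (resx hL z) = z.
Proof.
  apply functional_extensionality_dep; intro i.
  apply functional_extensionality_dep; intro h.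
  unfold plus, resx.
  destruct (excluded_middle_informative (K i)); f_equal; apply proof_irrelevance.
Qed.

Lemma resx_plus_l (K L : I -> Prop) (hK : subsetI K (setU K L))
  (x : Z E K) (y : Z E L) : resx hK (plus x y) = x.
Proof.
  apply functional_extensionality_dep; intro i.
  apply functional_extensionality_dep; intro h.
  unfold plus, resx.
  destruct (excluded_middle_informative (K i)); [|contradiction].
  f_equal; apply proof_irrelevance.
Qed.

Lemma resx_plus_r (K L : I -> Prop) (hd : forall i, K i -> L i -> False)
  (hL : subsetI L (setU K L)) (x : Z E K) (y : Z E L) :
  resx hL (plus x y) = y.
Proof.
  apply functional_extensionality_dep; intro i.
  apply functional_extensionality_dep; intro h.
  unfold plus, resx.
  destruct (excluded_middle_informative (K i)) as [hk|].
  - exfalso; exact (hd i hk h).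
  - f_equal; apply proof_irrelevance.
Qed.

Lemma restr_join_l (R S : mrel E) (x : Z E (J R)) :
  G (restr (join R S) (subsetU_l (J R) (J S))) x -> G R x.
Proof. intros [z [[HzR _] ->]]; exact HzR. Qed.

Lemma restr_join_r (R S : mrel E) (y : Z E (J S)) :
  G (restr (join R S) (subsetU_r (J R) (J S))) y -> G S y.
Proof. intros [z [[_ HzS] ->]]; exact HzS. Qed.

Lemma join_plus_closed (R S : mrel E)
  (hd : forall i, J R i -> J S i -> False) (x : Z E (J R)) (y : Z E (J S)) :
  G (restr (join R S) (subsetU_l (J R) (J S))) x ->
  G (restr (join R S) (subsetU_r (J R) (J S))) y ->
  G (join R S) (plus x y).
Proof.
  intros Hx Hy; split.
  - rewrite resx_plus_l; exact (restr_join_l Hx).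
  - rewrite (resx_plus_r hd); exact (restr_join_r Hy).
Qed.

Lemma join_restr_eq (K L : I -> Prop) (G0 : Z E (setU K L) -> Prop) :
  let T := MRel (setU K L) G0 in
  (forall x y, G (restr T (subsetU_l K L)) x ->
               G (restr T (subsetU_r K L)) y -> G0 (plus x y)) ->
  T = join (restr T (subsetU_l K L)) (restr T (subsetU_r K L)).
Proof.
  intros T Hplus; unfold T, join; simpl; f_equal.
  apply functional_extensionality; intro z.
  apply propositional_extensionality; split.
  - intro Hz; split; exists z; split; auto; apply resx_irrelevant.
  - intros [[zK [HK eK]] [zL [HL eL]]].
    rewrite <- (plus_resx (subsetU_l K L) (subsetU_r K L) z).
    apply Hplus.
    + exists zK; split; auto; rewrite eK; apply resx_irrelevant.
    + exists zL; split; auto; rewrite eL; apply resx_irrelevant.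
Qed.

Lemma scindable_iff_plus_closed (K L : I -> Prop)
  (hd : forall i, K i -> L i -> False) (G0 : Z E (setU K L) -> Prop) :
  let T := MRel (setU K L) G0 in
  scindable T K L <->
  (forall x y, G (restr T (subsetU_l K L)) x ->
               G (restr T (subsetU_r K L)) y -> G0 (plus x y)).
Proof.
  intro T; split.
  - intros [[JR GR] [[JS GS] [eR [eS eT]]]]; simpl in eR, eS; subst JR JS.
    injection eT as eG; apply inj_pair2 in eG; subst G0.
    exact (join_plus_closed (R := MRel K GR) (S := MRel L GS) hd).
  - intro Hplus.
    exists (restr T (subsetU_l K L)), (restr T (subsetU_r K L)).
    repeat split.
    exact (join_restr_eq Hplus).
Qed.

End Scindable.

Theorem mainTheorem7 (I : Type) (E : I -> Type)
  (hE : forall i : I, inhabited (E i))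
  (T : mrel E) (K L : I -> Prop) (hb : bipartition (J T) K L) :
  scindable T K L <->
  (forall (x : Z E K) (y : Z E L),
     G (restr T (bip_subK hb)) x ->
     G (restr T (bip_subL hb)) y ->
     G T (eq_rect (setU K L) (Z E) (plus x y) (J T) (bip_union hb))).
Proof.
  assert (hd : forall i, K i -> L i -> False) by (destruct hb; auto).
  generalize (bip_subK hb) (bip_subL hb) (bip_union hb); clear hb.
  destruct T as [J0 G0]; simpl; intros hK hL e; subst J0.
  rewrite (proof_irrelevance _ hK (subsetU_l K L)),
          (proof_irrelevance _ hL (subsetU_r K L)).
  exact (scindable_iff_plus_closed hd G0).
Qed.
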